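(* Let $X$ be a real normed space, $\mathcal M=\{M_1,\dots,M_n\}\subset\mathcal P^f_{\mathrm{Cl,Conv}}(X)$, $\Sigma(\mathcal M)\neq\emptyset$ and $d=(d_1,\dots,d_n)\in\Omega(\mathcal M)$. Suppose there is an index $s$ such that every nonempty set of the form $B_r(M_s)\cap K_d$ ($0\le r<\infty$) lies in the same finiteness class as the $M_i$. Then for every $K\in\Sigma_d(\mathcal M)$ there exists $i$ with $d_i=\sup_{x\in M_i}|x\,K|$.
   Context: For a metric space $X$, $p\in X$, $A\subset X$: $|p\,A|=\inf_{a\in A}|p\,a|$ ($=\infty$ if $A=\emptyset$); for $0\le r<\infty$, $B_r(A)=\{p:|p\,A|\le r\}$. For nonempty $A,B$, $d_H(A,B)=\max\{\sup_{a\in A}|a\,B|,\sup_{b\in B}|b\,A|\}\in[0,\infty]$. $\mathcal P_{\mathrm{Cl}}(X)$ is the set of nonempty closed subsets of $X$ with $d_H$; a finiteness class is an equivalence class of $A\sim B\iff d_H(A,B)<\infty$. $\mathcal P^f_{\mathrm{Cl,Conv}}(X)$ denotes a fixed finiteness class of the space of nonempty closed convex subsets of $X$ (a family of nonempty closed convex sets pairwise at finite Hausdorff distance, maximal with this property); let $\mathcal P^f_{\mathrm{Cl}}(X)$ be the finiteness class of $\mathcal P_{\mathrm{Cl}}(X)$ containing it. For $\mathcal M=\{M_1,\dots,M_n\}$ in it, $S_{\mathcal M}(Y)=\sum_i d_H(Y,M_i)$; $\Sigma(\mathcal M)$ is the set of minimizers of $S_{\mathcal M}$ over $\mathcal P^f_{\mathrm{Cl}}(X)$;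 for $K\in\Sigma(\mathcal M)$, $d(K)=(d_H(K,M_1),\dots,d_H(K,M_n))$; $\Omega(\mathcal M)=\{d(K):K\in\Sigma(\mathcal M)\}$; for $d\in\Omega(\mathcal M)$, $\Sigma_d(\mathcal M)=\{K\in\Sigma(\mathcal M):d(K)=d\}$ and $K_d=\bigcap_{i=1}^nB_{d_i}(M_i)$. *)

From HB Require Import structures.
From mathcomp Require Import all_boot all_order all_algebra.
From mathcomp Require Import all_classical all_reals all_analysis.
Set Implicit Arguments. Unset Strict Implicit. Unset Printing Implicit Defensive.
Import Order.TTheory GRing.Theory Num.Theory.
Import numFieldNormedType.Exports.
Local Open Scope classical_set_scope.
Local Open Scope ring_scope.
Local Open Scope ereal_scope.

Section Defs.
Variables (R : realType) (X : normedModType R).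

(* |p A| = inf_{a in A} |p a|, = +oo when A is empty *)
Definition distp (p : X) (A : set X) : \bar R :=
  ereal_inf [set (`|p - a|)%:E | a in A].

Definition Bset (r : R) (A : set X) : set X :=
  [set p | distp p A <= r%:E].

Definition dH (A B : set X) : \bar R :=
  maxe (ereal_sup [set distp a B | a in A]) (ereal_sup [set distp b A | b in B]).

(* the finiteness class of P_Cl(X) represented by the set C *)
Definition in_classCl (C Y : set X) : Prop :=
  Y !=set0 /\ closed Y /\ dH Y C < +oo.

Definition SM (n : nat) (M : 'I_n -> set X) (Y : set X) : \bar R :=
  \sum_(i < n) dH Y (M i).

Definition SigmaM (C : set X) (n : nat) (M : 'I_n -> set X) (K : set X) : Prop :=
  in_classCl C K /\ forall Y, in_classCl C Y -> SM M K <= SM M Y.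

Definition dvec_is (n : nat) (M : 'I_n -> set X) (K : set X) (d : 'I_n -> R) : Prop :=
  forall i, dH K (M i) = (d i)%:E.

Definition OmegaM (C : set X) (n : nat) (M : 'I_n -> set X) (d : 'I_n -> R) : Prop :=
  exists K, SigmaM C M K /\ dvec_is M K d.

Definition Kd (n : nat) (M : 'I_n -> set X) (d : 'I_n -> R) : set X :=
  \bigcap_(i in [set: 'I_n]) Bset (d i) (M i).

End Defs.

(* If no index attained d_i = sup_{x in M_i} |x K|, every such supremum would
   lie below d_i by a uniform gap g.  Pushing each point of K a distance at
   most g along a segment towards a point of K close to M_s lands, by
   convexity of M_s and of K_d, in K' = B_r(M_s) ∩ K_d for some r < d_s.  By
   hypothesis K' is in the finiteness class; it stays within d_i of every M_i
   and strictly within d_s of M_s, so S_M(K') < S_M(K), contradicting the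
   minimality of K. *)

From HB Require Import structures.
From mathcomp Require Import all_boot all_order all_algebra.
From mathcomp Require Import all_classical all_reals all_analysis.
From mathcomp Require Import lra.
Set Implicit Arguments. Unset Strict Implicit. Unset Printing Implicit Defensive.
Import Order.TTheory GRing.Theory Num.Theory.
Import numFieldNormedType.Exports.
Local Open Scope classical_set_scope.
Local Open Scope ring_scope.

Lemma exists_uniform_gap (R : realFieldType) (I : finType) (a b : I -> R) :
  (forall i, a i < b i) -> exists2 g : R, 0 < g & forall i, g < b i - a i.
Proof.
move=> ab; pose m := \big[Order.min/1]_i (b i - a i).
have m_gt0 : 0 < m by apply: lt_bigmin => // i _; rewrite subr_gt0.
exists (m / 2); first by rewrite divr_gt0.
by move=> i; have := bigmin_le 1 i (fun i => b i - a i); rewrite -/m; lra.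
Qed.

Local Open Scope ereal_scope.

Section point_set_distance.
Variables (R : realType) (X : normedModType R).
Implicit Types (A K : set X) (p q x : X).

Lemma distp_ge0 p A : 0 <= distp p A.
Proof. by apply: le_ereal_inf_tmp => _ [a _ <-]; rewrite lee_fin. Qed.

Lemma distp_le_norm p A a : A a -> distp p A <= (`|p - a|)%:E.
Proof. by move=> Aa; apply: ge_ereal_inf; exists (`|p - a|)%:E => //; exists a. Qed.

Lemma distp_ltP p A (r : R) :
  distp p A < r%:E -> exists2 a, A a & (`|p - a| < r)%R.
Proof. by move=> /ereal_inf_lt [_ [a Aa <-]]; rewrite lte_fin; exists a. Qed.

Lemma distp_le_approx p A (r : R) :
  (forall e : R, (0 < e)%R -> exists2 a, A a & (`|p - a| <= r + e)%R) ->
  distp p A <= r%:E.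
Proof.
move=> near; apply/lee_addgt0Pr => e e0; have [a Aa pa] := near e e0.
by apply: le_trans (distp_le_norm p Aa) _; rewrite -EFinD lee_fin.
Qed.

Lemma distp_lt_add p A (r e : R) :
  distp p A <= r%:E -> (0 < e)%R -> exists2 a, A a & (`|p - a| < r + e)%R.
Proof.
by move=> pA e0; apply: distp_ltP; apply: le_lt_trans pA _; rewrite lte_fin ltrDl.
Qed.

Lemma distp_convex A p q (u v : R) (t : {i01 R}) :
  convex_set A -> distp p A <= u%:E -> distp q A <= v%:E ->
  distp (t%:num *: p + (1 - t%:num) *: q)%R A <=
    (t%:num * u + (1 - t%:num) * v)%:E.
Proof.
move=> cA pA qA; apply: distp_le_approx => e e0.
have [a Aa pa] := distp_lt_add pA e0.
have [b Ab qb] := distp_lt_add qA e0.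
exists (t%:num *: a + (1 - t%:num) *: b)%R.
  by have := cA a b t; rewrite !inE; apply.
have t1 : (0 <= 1 - t%:num)%R by rewrite subr_ge0.
rewrite (_ : (_ - _)%R = (t%:num *: (p - a) + (1 - t%:num) *: (q - b))%R); last first.
  by rewrite !scalerBr opprD addrACA.
apply: (le_trans (ler_normD _ _)); rewrite !normrZ !ger0_norm //.
rewrite (_ : (_ + e)%R = (t%:num * (u + e) + (1 - t%:num) * (v + e))%R); last first.
  by rewrite !mulrDr addrACA -mulrDl subrKC mul1r.
by apply: lerD; apply: ler_wpM2l => //; apply: ltW.
Qed.

Lemma distp_near_le A K x (b δ : R) :
  (forall k, K k -> exists2 k', A k' & (`|k - k'| <= δ)%R) ->
  distp x K <= b%:E -> distp x A <= (b + δ)%:E.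
Proof.
move=> near xK; apply: distp_le_approx => e e0.
have [k Kk xk] := distp_lt_add xK e0.
have [k' Ak' kk'] := near k Kk.
exists k' => //; rewrite -(subrK k x) -addrA.
by apply: (le_trans (ler_normD _ _)); lra.
Qed.

Lemma Bset_closed (r : R) A : closed (Bset r A).
Proof.
move=> p clp; apply: distp_le_approx => e e0.
have e20 : (0 < e / 2)%R by rewrite divr_gt0.
have [q [qA pq]] := clp _ (@nbhsx_ballx _ _ p _ e20).
move: pq; rewrite -ball_normE /= => pq.
have [a Aa qa] := distp_lt_add qA e20.
exists a => //; rewrite -(subrK q p) -addrA.
by apply: (le_trans (ler_normD _ _)); lra.
Qed.

Lemma Bset_convex (r : R) A : convex_set A -> convex_set (Bset r A).
Proof.
move=> cA p q t; rewrite !inE /Bset /= => pA qA.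
by have := distp_convex t cA pA qA; rewrite -mulrDl subrKC mul1r.
Qed.

Lemma exists_Bset_near A L K (c D δ : R) :
  convex_set A -> convex_set L -> K `<=` L ->
  (0 <= c)%R -> (c < D)%R -> (0 < δ)%R ->
  (forall k, K k -> distp k A <= D%:E) -> (forall x, A x -> distp x K <= c%:E) ->
  exists r : R, [/\ (c < r)%R, (r < D)%R &
    forall k, K k -> exists2 k', (Bset r A `&` L) k' & (`|k - k'| <= δ)%R].
Proof.
move=> cA cL KL c0 cD δ0 KA AK.
pose c' := ((c + D) / 2)%R; pose B := (D + 1 + c')%R.
have B0 : (0 < B)%R by rewrite /B /c'; lra.
have δB0 : (0 < δ + B)%R by rewrite addr_gt0.
pose t := (δ / (δ + B))%R.
have t0 : (0 < t)%R by rewrite divr_gt0.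
have t1 : (t < 1)%R by rewrite -(ltr_pM2r δB0) mul1r divfK ?gt_eqF // ltrDl.
have tB : (t * B <= δ)%R.
  by rewrite /t mulrAC ler_pdivrMr // ler_pM2l // lerDr ltW.
pose r := (t * c' + (1 - t) * D)%R.
exists r; split; [rewrite /r /c'; nra | rewrite /r /c'; nra |].
(* k' := t k2 + (1 - t) k, where k2 in K lies within c' of a point of A near k *)
move=> k Kk; pose t01 : {i01 R} := Itv01 (ltW t0) (ltW t1).
have [m Am km] := distp_lt_add (KA k Kk) ltr01.
have [k2 Kk2 mk2] : exists2 k2, K k2 & (`|m - k2| < c')%R.
  by apply: distp_ltP; apply: le_lt_trans (AK m Am) _; rewrite lte_fin /c'; lra.
exists (t *: k2 + (1 - t) *: k)%R; first split.
- apply: (distp_convex t01 cA _ (KA k Kk)).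
  by apply: le_trans (distp_le_norm k2 Am) _; rewrite lee_fin distrC ltW.
- by have := cL k2 k t01; rewrite !inE; apply; apply: KL.
- rewrite (_ : (k - _ = t *: (k - k2))%R); last first.
    by rewrite scalerBl scale1r scalerBr opprD opprB addrA addrC addrA subrK addrC.
  rewrite normrZ gtr0_norm // (le_trans _ tB) // ler_pM2l // -(subrK m k) -addrA.
  by apply: (le_trans (ler_normD _ _)); rewrite /B; lra.
Qed.

End point_set_distance.

Section hausdorff_distance.
Variables (R : realType) (X : normedModType R).
Implicit Types (A K : set X).

Lemma distp_le_dH K A k : K k -> distp k A <= dH K A.
Proof. by move=> Kk; rewrite /dH le_max ereal_sup_ubound //; exists k. Qed.

Lemma sup_distp_le_dH K A : ereal_sup [set distp x K | x in A] <= dH K A.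
Proof. by rewrite /dH le_max lexx orbT. Qed.

Lemma dH_le K A (b : R) :
  (forall k, K k -> distp k A <= b%:E) -> (forall x, A x -> distp x K <= b%:E) ->
  dH K A <= b%:E.
Proof.
move=> KA AK; rewrite /dH ge_max; apply/andP; split; apply: ge_ereal_sup.
- by move=> _ [k Kk <-]; exact: KA.
- by move=> _ [x Ax <-]; exact: AK.
Qed.

Lemma sup_distp_lt_real K A (b : R) :
  A !=set0 -> ereal_sup [set distp x K | x in A] < b%:E ->
  exists ε : R, [/\ (0 <= ε)%R, (ε < b)%R & forall x, A x -> distp x K <= ε%:E].
Proof.
move=> [a Aa] sup_b; set e := ereal_sup _ in sup_b *.
have e_ge0 : 0 <= e.
  by apply: le_trans (distp_ge0 a K) _; apply: ereal_sup_ubound; exists a.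
have e_fin : e \is a fin_num by rewrite ge0_fin_numE // (lt_trans sup_b) ?ltry.
exists (fine e); rewrite -lee_fin -lte_fin fineK //; split => // x Ax.
by apply: ereal_sup_ubound; exists x.
Qed.

Lemma dH_le_near K K' A (b δ ε : R) :
  (forall k', K' k' -> distp k' A <= b%:E) ->
  (forall k, K k -> exists2 k', K' k' & (`|k - k'| <= δ)%R) ->
  (forall x, A x -> distp x K <= ε%:E) -> (ε + δ <= b)%R ->
  dH K' A <= b%:E.
Proof.
move=> K'A near AK εδb; apply: dH_le => // x Ax.
by apply: le_trans (distp_near_le near (AK x Ax)) _; rewrite lee_fin.
Qed.

Variables (n : nat) (M : 'I_n -> set X) (d : 'I_n -> R).

Lemma Kd_closed : closed (Kd M d).
Proof. by apply: closed_bigI => i _; exact: Bset_closed. Qed.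

Lemma Kd_convex : (forall i, convex_set (M i)) -> convex_set (Kd M d).
Proof.
move=> cM p q t; rewrite !inE => pK qK i _.
have := @Bset_convex _ _ (d i) _ (cM i) p q t.
by rewrite !inE; apply; [exact: pK | exact: qK].
Qed.

Lemma dvec_sub_Kd K : dvec_is M K d -> K `<=` Kd M d.
Proof. by move=> dK k Kk i _; rewrite /Bset /= -(dK i); exact: distp_le_dH. Qed.

Lemma SM_lt_dvec K Y (s : 'I_n) (w : R) : dvec_is M K d ->
  (forall i, dH Y (M i) <= (d i)%:E) -> dH Y (M s) <= w%:E -> (w < d s)%R ->
  SM M Y < SM M K.
Proof.
move=> dK Yd Ys ws.
pose v i := if i == s then w else d i.
have Yv : SM M Y <= (\sum_(i < n) v i)%:E.
  rewrite /SM -sumEFin; apply: lee_sum => i _; rewrite /v.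
  by case: eqP => [->|_]; [exact: Ys | exact: Yd].
apply: le_lt_trans Yv _.
rewrite /SM (eq_bigr (fun i => (d i)%:E)); last by move=> i _; exact: dK.
rewrite sumEFin lte_fin.
rewrite [ltRHS](bigD1 s) // [ltLHS](bigD1 s) //= /v eqxx.
by rewrite (eq_bigr d) ?ltrD2r // => i /negPf ->.
Qed.

End hausdorff_distance.

Theorem mainTheorem16 (R : realType) (X : normedModType R)
  (C : set X) (n : nat) (M : 'I_n -> set X) (d : 'I_n -> R) :
  C !=set0 -> closed C -> convex_set C ->
  (forall i, M i !=set0 /\ closed (M i) /\ convex_set (M i) /\ dH (M i) C < +oo) ->
  (exists K, SigmaM C M K) ->
  OmegaM C M d ->
  (exists s : 'I_n, forall r : R, (0 <= r)%R ->
     Bset r (M s) `&` Kd M d !=set0 ->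
     dH (Bset r (M s) `&` Kd M d) C < +oo) ->
  forall K, SigmaM C M K -> dvec_is M K d ->
  exists i : 'I_n, (d i)%:E = ereal_sup [set distp x K | x in M i].
Proof.
move=> _ _ _ M_props _ _ [s Bset_class] K [[[k0 Kk0] _] K_min] dK.
have M_convex i : convex_set (M i) by case: (M_props i) => _ [_ []].
apply: contrapT => /forallNP not_attained.
have sup_lt i : ereal_sup [set distp x K | x in M i] < (d i)%:E.
  rewrite lt_neqAle -(dK i) sup_distp_le_dH andbT dK.
  by apply/eqP => /esym; exact: not_attained.
have [ε /all_and3[ε_ge0 ε_lt distp_le_ε]] :=
  choice (fun i => sup_distp_lt_real (M_props i).1 (sup_lt i)).
have [g g_gt0 g_lt] := exists_uniform_gap ε_lt.
have [r [ε_r r_d near]] := exists_Bset_near (M_convex s) (Kd_convex M_convex)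
  (dvec_sub_Kd dK) (ε_ge0 s) (ε_lt s) g_gt0 (fun k Kk => dvec_sub_Kd dK Kk I)
  (distp_le_ε s).
pose K' := Bset r (M s) `&` Kd M d.
have K'_class : in_classCl C K'.
  have [k' K'k' _] := near k0 Kk0.
  split; first by exists k'.
  split; first by apply: closedI; [exact: Bset_closed | exact: Kd_closed].
  by apply: Bset_class; [have := ε_ge0 s; lra | exists k'].
suff : SM M K' < SM M K by rewrite ltNge K_min.
apply: (SM_lt_dvec (w := Num.max r (ε s + g)%R)) dK _ _ _.
- move=> i; apply: (dH_le_near _ near (distp_le_ε i)) => [k [_ Kdk]|].
    exact: Kdk.
  by have := g_lt i; lra.
- apply: (dH_le_near _ near (distp_le_ε s)) => [k [Bk _]|].
    by apply: le_trans Bk _; rewrite lee_fin le_max lexx.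
  by rewrite le_max lexx orbT.
- by rewrite gt_max r_d /=; have := g_lt s; lra.
Qed.
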